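(* Let $a$ and $b$ be coprime odd integers and let $\beta\geq2$ be an integer. The following are equivalent: (1) $1\notin G_{(a,b)}(\beta)$; (2) $2^\beta\nmid(a+b)$; (3) $n\notin G_{(a,b)}(\beta)$ for all odd natural numbers $n$.
   Context: For coprime nonzero integers $a,b$ and an integer $\beta\geq0$, $G_{(a,b)}(\beta)$ is the set of positive integers $d$ such that $2^\beta d\mid(a^k+b^k)$ for some positive integer $k$. *)

From Stdlib Require Import ZArith.
Open Scope Z_scope.

Definition in_G (a b : Z) (beta : nat) (d : Z) : Prop :=
  0 < d /\ exists k : nat, (1 <= k)%nat /\
    (2 ^ Z.of_nat beta * d | a ^ Z.of_nat k + b ^ Z.of_nat k).

(* If 4 divides a^k + b^k with a, b odd, then k is odd, since for even k both powers are 1 mod 4.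
   For odd k, a^k + b^k = (a + b) (a^(k-1) - a^(k-2) b + ... + b^(k-1)), and the second factor is
   a sum of k odd terms, hence odd; so 2^beta divides a^k + b^k only if it divides a + b.  This
   gives 1 in G(beta) iff 2^beta | a + b, and G(beta) is closed under positive divisors, so it
   contains an odd number iff it contains 1. *)

From Stdlib Require Import ZArith Znumtheory Zpow_facts Lia.
Open Scope Z_scope.

Fixpoint alt_geom_sum (a b : Z) (k : nat) : Z :=
  match k with
  | O => 0
  | S k' => a * alt_geom_sum a b k' + (- b) ^ Z.of_nat k'
  end.

Lemma alt_geom_sumP (a b : Z) (k : nat) :
  (a + b) * alt_geom_sum a b k = a ^ Z.of_nat k - (- b) ^ Z.of_nat k.
Proof.
  induction k as [|k IH]; simpl alt_geom_sum.
  - simpl; ring.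
  - rewrite Nat2Z.inj_succ, !Z.pow_succ_r by lia.
    transitivity (a * ((a + b) * alt_geom_sum a b k) + (a + b) * (- b) ^ Z.of_nat k);
      [ring | rewrite IH; ring].
Qed.

Lemma odd_alt_geom_sum (a b : Z) (k : nat) :
  Z.odd a = true -> Z.odd b = true -> Z.odd (alt_geom_sum a b k) = Nat.odd k.
Proof.
  intros Ha Hb. induction k as [|k IH]; simpl alt_geom_sum.
  - reflexivity.
  - rewrite Z.odd_add, Z.odd_mul, Ha, IH, Nat.odd_succ, <- Nat.negb_odd.
    destruct (Nat.eq_dec k 0) as [-> | Hk]; [reflexivity |].
    rewrite Z.odd_pow, Z.odd_opp, Hb by lia.
    now destruct (Nat.odd k).
Qed.

Lemma sum_odd_pow_factor (a b : Z) (k : nat) : Nat.odd k = true ->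
  a ^ Z.of_nat k + b ^ Z.of_nat k = (a + b) * alt_geom_sum a b k.
Proof.
  intros Hk. rewrite alt_geom_sumP, Z.pow_opp_odd; [ring |].
  apply Nat.odd_spec in Hk as [m Hm]. exists (Z.of_nat m). lia.
Qed.

Lemma odd_sqr_mod4 (a : Z) : Z.odd a = true -> a ^ 2 mod 4 = 1.
Proof.
  intros Ha. apply Z.odd_spec in Ha as [m ->].
  replace ((2 * m + 1) ^ 2) with (1 + (m * m + m) * 4) by ring.
  now rewrite Z_mod_plus_full.
Qed.

Lemma odd_pow_even_mod4 (a m : Z) : Z.odd a = true -> 0 <= m -> a ^ (2 * m) mod 4 = 1.
Proof.
  intros Ha Hm.
  rewrite Z.pow_mul_r, <- Z.mod_pow_l, (odd_sqr_mod4 a Ha), Z.pow_1_l by lia.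
  reflexivity.
Qed.

Lemma sum_even_pow_mod4 (a b m : Z) : Z.odd a = true -> Z.odd b = true -> 0 <= m ->
  (a ^ (2 * m) + b ^ (2 * m)) mod 4 = 2.
Proof.
  intros Ha Hb Hm.
  now rewrite Z.add_mod, !odd_pow_even_mod4 by (easy || lia).
Qed.

Lemma Zdivide_two_pow_odd_factor (n x s : Z) : 0 <= n -> Z.odd s = true ->
  (2 ^ n | x * s) -> (2 ^ n | x).
Proof.
  intros Hn Hs Hd. apply Z.gauss with s; [now rewrite Z.mul_comm |].
  apply Zgcd_1_rel_prime, rel_prime_sym, rel_prime_Zpower_r; [exact Hn |].
  apply rel_prime_sym, prime_rel_prime; [exact prime_2 |].
  intros [q ->]. now rewrite Z.odd_mul, Bool.andb_false_r in Hs.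
Qed.

Lemma two_pow_divide_sum_pow (a b : Z) (beta k : nat) :
  Z.odd a = true -> Z.odd b = true -> (2 <= beta)%nat ->
  (2 ^ Z.of_nat beta | a ^ Z.of_nat k + b ^ Z.of_nat k) -> (2 ^ Z.of_nat beta | a + b).
Proof.
  intros Ha Hb Hbeta Hd.
  destruct (Nat.Even_or_Odd k) as [[m ->] | Hk].
  - exfalso.
    assert (H4 : (4 | 2 ^ Z.of_nat beta)).
    { exists (2 ^ Z.of_nat (beta - 2)).
      rewrite <- (Z.pow_add_r 2 _ 2) by lia. f_equal. lia. }
    apply (Z.divide_trans _ _ _ H4), Zdivide_mod in Hd.
    rewrite Nat2Z.inj_mul, sum_even_pow_mod4 in Hd by (easy || lia).
    discriminate.
  - apply Nat.odd_spec in Hk.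
    rewrite sum_odd_pow_factor in Hd by exact Hk.
    apply Zdivide_two_pow_odd_factor with (alt_geom_sum a b k); [lia | | exact Hd].
    now rewrite odd_alt_geom_sum.
Qed.

Lemma in_G_divisor (a b : Z) (beta : nat) (d e : Z) :
  0 < e -> (e | d) -> in_G a b beta d -> in_G a b beta e.
Proof.
  intros He Hed [_ [k [Hk Hd]]]. split; [exact He |].
  exists k. split; [exact Hk |].
  eapply Z.divide_trans; [| exact Hd]. now apply Z.mul_divide_mono_l.
Qed.

Lemma in_G_1 (a b : Z) (beta : nat) :
  Z.odd a = true -> Z.odd b = true -> (2 <= beta)%nat ->
  in_G a b beta 1 <-> (2 ^ Z.of_nat beta | a + b).
Proof.
  intros Ha Hb Hbeta. unfold in_G. rewrite Z.mul_1_r. split.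
  - intros [_ [k [_ Hd]]]. exact (two_pow_divide_sum_pow a b beta k Ha Hb Hbeta Hd).
  - intros Hd. split; [lia |]. exists 1%nat. split; [lia |].
    now rewrite !Z.pow_1_r.
Qed.

Theorem corollary2p10 (a b : Z) (beta : nat) :
  a <> 0 -> b <> 0 -> Z.gcd a b = 1 -> Z.odd a = true -> Z.odd b = true ->
  (2 <= beta)%nat ->
  ((~ in_G a b beta 1) <-> ~ (2 ^ Z.of_nat beta | a + b)) /\
  (~ (2 ^ Z.of_nat beta | a + b) <->
     (forall n : nat, Nat.odd n = true -> ~ in_G a b beta (Z.of_nat n))).
Proof.
  intros _ _ _ Ha Hb Hbeta.
  rewrite <- (in_G_1 a b beta Ha Hb Hbeta).
  split; [reflexivity | split].
  - intros Hnot1 n _ Hn. apply Hnot1.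
    exact (in_G_divisor a b beta _ 1 Z.lt_0_1 (Z.divide_1_l _) Hn).
  - intros Hodd. exact (Hodd 1%nat eq_refl).
Qed.
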